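(* For every $n\ge 4$, $$\mathrm{bdim}(P_n)=\mathrm{bdim}(C_n)=\left\lfloor \frac{2n+2}{5}\right\rfloor,$$ where $P_n$ and $C_n$ are the path and the cycle on $n$ vertices.
   Context: $d(x,y)$ is the distance in $G$. For an integer $k\ge1$ let $d_k(x,y)=\min\{d(x,y),k+1\}$. A function $f:V(G)\to\mathbb{Z}_{\ge 0}$ is a resolving broadcast of $G$ if for all distinct $x,y\in V(G)$ there is $z\in V(G)$ with $f(z)=i>0$ and $d_i(x,z)\ne d_i(y,z)$. The broadcast dimension $\mathrm{bdim}(G)$ is the minimum of $\sum_{v\in V(G)}f(v)$ over all resolving broadcasts $f$ of $G$. *)

From mathcomp Require Import all_boot.
Set Implicit Arguments. Unset Strict Implicit. Unset Printing Implicit Defensive.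

Section Graphs.
Variable T : finType.
Variable e : rel T.  (* adjacency relation of a (symmetric, irreflexive) graph *)

Fixpoint ball (k : nat) (x : T) : {set T} :=
  match k with
  | 0 => [set x]
  | k'.+1 => ball k' x :|: [set y | [exists z in ball k' x, e z y]]
  end.

(* graph distance: least k with y in ball k x (distance in a connected graph
   on #|T| vertices is always < #|T|, so searching in [0, #|T|) suffices). *)
Definition gdist (x y : T) : nat := find (fun k => y \in ball k x) (iota 0 #|T|).

Definition tdist (k : nat) (x y : T) : nat := minn (gdist x y) k.+1.

Definition resolving_broadcast (f : T -> nat) : Prop :=
  forall x y : T, x != y ->
    exists z : T, 0 < f z /\ tdist (f z) x z != tdist (f z) y z.

Definition is_bdim (b : nat) : Prop :=
  (exists f : T -> nat, resolving_broadcast f /\ \sum_(v : T) f v = b) /\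
  (forall f : T -> nat, resolving_broadcast f -> b <= \sum_(v : T) f v).
End Graphs.

Definition path_adj (n : nat) : rel 'I_n :=
  fun i j => (i.+1 == j :> nat) || (j.+1 == i :> nat).

Definition cycle_adj (n : nat) : rel 'I_n :=
  fun i j => (i.+1 %% n == j :> nat) || (j.+1 %% n == i :> nat).

Arguments path_adj n : clear implicits.
Arguments cycle_adj n : clear implicits.

From mathcomp Require Import all_boot zify.
Set Implicit Arguments. Unset Strict Implicit. Unset Printing Implicit Defensive.

(* Lower bound, for any graph.  Say that x hears the broadcaster z when
   d(x,z) <= f z.  For a resolving broadcast f at most one vertex hears nobody,
   and the vertices hearing z alone are told apart by their distance to z, so
   there are at most f z + 1 of them.  Double counting the pairs (listener,
   broadcaster) then gives 2|V| <= 5 * cost(f) + 2 whenever every set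
   {x | d(x,z) <= k} has at most 2k+1 vertices; this holds in every symmetric
   graph of maximum degree two, whose spheres of positive radius have at most
   two vertices.

   Upper bound.  A broadcast of range one from every vertex of a set L only
   reveals to a vertex whether it lies in L and which members of L are its
   neighbours; hence every locating set L gives a resolving broadcast of cost
   |L|.  For the path we take the vertices congruent to 1 or 3 modulo 5 (moving
   the last one when n = 3 (mod 5)): at most one vertex has no landmark
   neighbour and no two vertices at distance two share their landmark
   neighbours, which locates the path.  The same set locates the cycle when
   n >= 5, and the 4-cycle is located by its vertices 0 and 1. *)

Section Counting.
Variable T : finType.

Lemma card_set_sum (P : pred T) : #|[set x | P x]| = \sum_(x : T) (P x : nat).
Proof. by rewrite -sum1dep_card big_mkcond. Qed.

Lemma double_count (R : T -> T -> bool) :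
  \sum_(x : T) #|[set z | R x z]| = \sum_(z : T) #|[set x | R x z]|.
Proof.
under eq_bigr => x _ do rewrite card_set_sum.
by rewrite exchange_big; under eq_bigr => z _ do rewrite -card_set_sum.
Qed.

Lemma card_le_inj (A : {set T}) (g : T -> nat) m :
  {in A &, injective g} -> (forall x, x \in A -> g x < m) -> #|A| <= m.
Proof.
move=> g_inj g_lt; rewrite cardE -(size_map g) -(size_iota 0 m).
apply: uniq_leq_size => [|k /mapP [x]].
  by rewrite map_inj_in_uniq ?enum_uniq // => x y; rewrite !mem_enum; exact: g_inj.
by rewrite mem_enum => Ax ->; rewrite mem_iota add0n g_lt.
Qed.
End Counting.

Section Balls.
Variable T : finType.
Variable e : rel T.

Lemma ball_monotone x j k : j <= k -> ball e j x \subset ball e k x.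
Proof.
move=> /subnKC <-; elim: (k - j) => [|i IH]; first by rewrite addn0.
by rewrite addnS (subset_trans IH) //= subsetUl.
Qed.

Lemma ball_prepend k x w y : e x w -> y \in ball e k w -> y \in ball e k.+1 x.
Proof.
move=> exw; elim: k y => [|k IH] y /=.
  by rewrite !inE => /eqP ->; apply/orP; right; apply/existsP; exists x; rewrite !inE eqxx.
rewrite inE => /orP [/IH yx|]; first by rewrite inE yx.
rewrite inE => /existsP [u /andP [/IH ux euy]].
by rewrite inE; apply/orP; right; rewrite inE; apply/existsP; exists u; rewrite ux.
Qed.

Lemma ball_gdist x y : gdist e x y < #|T| -> y \in ball e (gdist e x y) x.
Proof.
rewrite /gdist => lt_d.
have found : has (fun k => y \in ball e k x) (iota 0 #|T|) by rewrite has_find size_iota.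
by have := nth_find 0 found; rewrite nth_iota ?add0n // -(size_iota 0 #|T|) -has_find.
Qed.

Hypothesis e_sym : symmetric e.

Lemma ball_sym k x y : y \in ball e k x -> x \in ball e k y.
Proof.
elim: k y => [|k IH] y /=; first by rewrite !inE eq_sym.
rewrite inE => /orP [/IH xy|]; first exact: subsetP (ball_monotone _ (leqnSn k)) _ xy.
rewrite inE => /existsP [w /andP [/IH xw ewy]].
by apply: ball_prepend xw; rewrite e_sym.
Qed.

Hypothesis deg2 : forall x, #|[set y | e x y]| <= 2.

(* The first sphere consists of neighbours of the centre. *)
Lemma sphere1_card x : #|ball e 1 x :\: ball e 0 x| <= 2.
Proof.
apply: leq_trans _ (deg2 x); apply: subset_leq_card; apply/subsetP => y.
rewrite /= !inE => /andP [/negPf -> /=] /existsP [w].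
by rewrite inE => /andP [/eqP ->].
Qed.

(* Each vertex of a sphere of positive radius has a neighbour in the previous
   ball, hence at most one neighbour in the next sphere: spheres cannot grow. *)
Lemma sphere_shrink k x :
  #|ball e k.+2 x :\: ball e k.+1 x| <= #|ball e k.+1 x :\: ball e k x|.
Proof.
set S' := _ :\: _; set S := _ :\: _.
have from_prev j v : v \in ball e j.+1 x :\: ball e j x ->
    exists2 w, w \in ball e j x & e w v.
  rewrite /= !inE => /andP [vj /orP [vj'|]]; first by rewrite vj' in vj.
  by move=> /existsP [w /andP [wj ewv]]; exists w.
pose parent v := odflt x [pick w in ball e k.+1 x | e w v].
have parentP v : v \in S' -> parent v \in S /\ e (parent v) v.
  move=> vS'; have [w wk1 ewv] := from_prev _ _ vS'.
  rewrite /parent; case: pickP => [u /andP [uk1 euv]|/(_ w)]; last by rewrite wk1 ewv.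
  split=> //; rewrite in_setD uk1 andbT; apply: contraT; rewrite negbK => uk.
  move: vS'; rewrite in_setD => /andP [/negbTE <- _].
  by rewrite /= in_setU inE; apply/orP; right; apply/existsP; exists u; rewrite uk.
have parent_inj : {in S' &, injective parent}.
  move=> v v' vS' v'S' eq_par; apply: contraTeq (deg2 (parent v)) => neq_vv'.
  have [parS epv] := parentP v vS'; have [_ epv'] := parentP v' v'S'.
  have [u uk eup] := from_prev _ _ parS.
  have notin w : w \in S' -> w \notin ball e k x.
    by rewrite in_setD => /andP [nw _]; apply: contra nw; apply/subsetP/ball_monotone.
  have u_new : u \notin [set v; v'].
    by rewrite !inE; apply/norP; split; apply: contraTneq uk => ->; rewrite ?notin.
  rewrite -ltnNge; apply: leq_trans (_ : #|u |: [set v; v']| <= _).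
    by rewrite cardsU1 u_new cards2 neq_vv'.
  apply: subset_leq_card; apply/subsetP => w; rewrite !inE.
  by case/or3P => /eqP ->; [rewrite e_sym | | rewrite eq_par].
rewrite -(card_in_imset parent_inj); apply: subset_leq_card.
by apply/subsetP => _ /imsetP [v vS' ->]; case: (parentP v vS').
Qed.

Lemma sphere_card k x : #|ball e k.+1 x :\: ball e k x| <= 2.
Proof. by elim: k => [|k IH]; [exact: sphere1_card | exact: leq_trans (sphere_shrink k x) IH]. Qed.

Lemma ball_card k x : #|ball e k x| <= k.*2.+1.
Proof.
elim: k => [|k IH]; first by rewrite /= cards1.
rewrite -(cardsID (ball e k x)) (setIidPr (ball_monotone _ (leqnSn k))).
by have := sphere_card k x; lia.
Qed.

Lemma near_card z k : #|[set x | gdist e x z <= k]| <= k.*2.+1.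
Proof.
case: (ltnP k #|T|) => [k_lt|k_ge]; last first.
  by apply: leq_trans (max_card _) _; lia.
apply: leq_trans (ball_card k z); apply: subset_leq_card; apply/subsetP => x.
rewrite inE => d_le; apply: ball_sym => //.
exact: subsetP (ball_monotone _ d_le) _ (ball_gdist (leq_ltn_trans d_le k_lt)).
Qed.
End Balls.

Section LowerBound.
Variable T : finType.
Variable e : rel T.

Lemma tdist_far k x z : k < gdist e x z -> tdist e k x z = k.+1.
Proof. by move=> lt_k; apply/minn_idPr. Qed.

Variable f : T -> nat.

Definition hears x z := (0 < f z) && (gdist e x z <= f z).
Definition nheard x := #|[set z | hears x z]|.

Hypothesis f_res : resolving_broadcast e f.

Lemma resolved_by_hearer x y : x != y ->
  exists2 z, hears x z || hears y z & tdist e (f z) x z != tdist e (f z) y z.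
Proof.
move=> neq_xy; have [z [fz_gt0 dz]] := f_res neq_xy; exists z => //.
apply: contraTT dz; rewrite /hears fz_gt0 negb_or /= -!ltnNge => /andP [fx fy].
by rewrite !tdist_far // eqxx.
Qed.

Lemma deaf_unique : #|[set x | nheard x == 0]| <= 1.
Proof.
apply/card_le1_eqP => x y; rewrite !inE /nheard !cards_eq0 => /eqP deaf_x /eqP deaf_y.
case: (eqVneq x y) => // neq_xy; have [z heard _] := resolved_by_hearer neq_xy.
have deaf u : [set z | hears u z] = set0 -> ~~ hears u z by move/setP/(_ z); rewrite !inE => ->.
by have := deaf _ deaf_x; have := deaf _ deaf_y; case/orP: heard => ->.
Qed.

Hypothesis near_small : forall z k, #|[set x | gdist e x z <= k]| <= k.*2.+1.

Lemma listeners_card z : #|[set x | hears x z]| <= (0 < f z) * (f z).*2.+1.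
Proof.
rewrite /hears; case: (posnP (f z)) => [_ | _]; last by rewrite mul1n; exact: near_small.
by rewrite leqn0 cards_eq0; apply/eqP/setP => x; rewrite !inE.
Qed.

(* Vertices hearing z alone are determined by their distance to z. *)
Lemma lonely_listeners_card z :
  #|[set x | hears x z && (nheard x == 1)]| <= (0 < f z) * (f z).+1.
Proof.
case: (posnP (f z)) => [fz0 | fz_gt0].
  by rewrite leqn0 cards_eq0; apply/eqP/setP => x; rewrite !inE /hears fz0.
rewrite mul1n; apply: (@card_le_inj _ _ (gdist e ^~ z)); last first.
  by move=> x; rewrite inE => /andP [/andP [_ d_le] _].
move=> x y; rewrite !inE => /andP [hx /cards1P [zx sx]] /andP [hy /cards1P [zy sy]] eq_d.
have unique_hearer u zu w : [set v | hears u v] = [set zu] -> hears u w -> w = zu.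
  by move/setP/(_ w); rewrite !inE => -> /eqP.
case: (eqVneq x y) => // neq_xy; have [w heard] := resolved_by_hearer neq_xy.
have -> : w = z.
  case/orP: heard => hw.
    by rewrite (unique_hearer _ _ _ sx hw) (unique_hearer _ _ _ sx hx).
  by rewrite (unique_hearer _ _ _ sy hw) (unique_hearer _ _ _ sy hy).
by rewrite /tdist eq_d eqxx.
Qed.

Lemma broadcast_cost_lower_bound : (#|T|).*2 <= 5 * \sum_(v : T) f v + 2.
Proof.
have per_vertex x : 2 <= 2 * (nheard x == 0) + (nheard x == 1) + nheard x.
  by case: (nheard x) => [|[|m]].
have sum_lonely :
    \sum_(x : T) (nheard x == 1 : nat) = \sum_(z : T) #|[set x | hears x z && (nheard x == 1)]|.
  rewrite -double_count; apply: eq_bigr => x _.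
  case: (eqVneq (nheard x) 1) => [lonely|_] /=.
    by under eq_finset => z do rewrite andbT; rewrite -[RHS]/(nheard x) lonely.
  by apply/esym/eqP; rewrite cards_eq0; apply/eqP/setP => z; rewrite !inE andbF.
have sum_deaf : \sum_(x : T) (nheard x == 0 : nat) <= 1 by rewrite -card_set_sum deaf_unique.
have sum_z : \sum_(z : T) #|[set x | hears x z && (nheard x == 1)]| +
             \sum_(z : T) #|[set x | hears x z]| <= 5 * \sum_(z : T) f z.
  rewrite -big_split big_distrr; apply: leq_sum => z _.
  apply: leq_trans (leq_add (lonely_listeners_card z) (listeners_card z)) _.
  by case: (f z) => [|m] //=; lia.
have sum_vertex : (#|T|).*2 <= 2 * \sum_(x : T) (nheard x == 0 : nat) +
    \sum_(x : T) (nheard x == 1 : nat) + \sum_(x : T) nheard x.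
  have -> : (#|T|).*2 = \sum_(x : T) 2 by rewrite sum_nat_const muln2.
  rewrite big_distrr -!big_split.
  by apply: leq_sum => x _; exact: per_vertex.
rewrite sum_lonely (double_count hears) in sum_vertex; lia.
Qed.
End LowerBound.

Section Locating.
Variable T : finType.
Variable e : rel T.

Lemma tdist1_code x z : 1 < #|T| ->
  tdist e 1 x z = if z == x then 0 else if e x z then 1 else 2.
Proof.
rewrite /tdist /gdist; case: #|T| => [|[|N]] // _.
rewrite /= !inE; case: (z == x) => //=.
have -> : [exists w in [set x], e w z] = e x z.
  by apply/existsP/idP => [[w /andP [/set1P -> //]]|exz]; exists x; rewrite inE eqxx.
by case: (e x z).
Qed.

Definition locating (L : pred T) : Prop :=
  forall x y, x != y -> ~~ L x -> ~~ L y -> exists2 z, L z & e x z != e y z.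

Lemma locating_resolving (L : pred T) :
  1 < #|T| -> locating L -> resolving_broadcast e (fun v => L v : nat).
Proof.
move=> T_gt1 L_loc x y neq_xy.
have in_L z : L z -> z != x -> z != y -> e x z != e y z ->
    exists z0, 0 < L z0 /\ tdist e (L z0) x z0 != tdist e (L z0) y z0.
  move=> Lz zx zy sep; exists z; rewrite Lz /= !tdist1_code // (negbTE zx) (negbTE zy).
  by split=> //; move: sep; case: (e x z); case: (e y z).
case Lx: (L x).
  exists x; rewrite Lx /= !tdist1_code // eqxx; split=> //.
  by case: ifP => [/eqP exy|_]; [rewrite exy eqxx in neq_xy | case: (e y x)].
case Ly: (L y).
  exists y; rewrite Ly /= !tdist1_code // eqxx; split=> //.
  by case: ifP => [/eqP eyx|_]; [rewrite eyx eqxx in neq_xy | case: (e x y)].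
have [z Lz sep] := L_loc x y neq_xy (negbT Lx) (negbT Ly).
by apply: (in_L z Lz _ _ sep); apply: contraTneq Lz => ->; rewrite ?Lx ?Ly.
Qed.

Lemma bdim_degree2 (L : pred T) :
  symmetric e -> (forall x, #|[set y | e x y]| <= 2) -> 1 < #|T| ->
  locating L -> #|L| = (2 * #|T| + 2) %/ 5 -> is_bdim e ((2 * #|T| + 2) %/ 5).
Proof.
move=> e_sym deg2 T_gt1 L_loc card_L; split.
  exists (fun v => L v : nat); split; first exact: locating_resolving.
  rewrite -card_L -sum1_card [RHS]big_mkcond; apply: eq_bigr => v _.
  by rewrite unfold_in; case: (L v).
move=> f f_res; have := broadcast_cost_lower_bound f_res (near_card e_sym deg2); lia.
Qed.
End Locating.

Definition adjp (x z : nat) : bool := (x.+1 == z) || (z.+1 == x).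
Definition adjc (n x z : nat) : bool := (x.+1 %% n == z) || (z.+1 %% n == x).

Section PathLocating.
Variable n : nat.
Variable L : pred nat.

Definition dominated (x : nat) : bool := (0 < x) && L x.-1 || L x.+1.

Hypothesis undominated_unique : forall x y, x < n -> y < n ->
  ~~ L x -> ~~ L y -> ~~ dominated x -> ~~ dominated y -> x = y.
Hypothesis no_twins : forall x, x.+2 < n ->
  ~~ L x -> ~~ L x.+2 -> L x.+1 -> (0 < x) && L x.-1 || L x.+3.

Lemma path_locating x y : x < n -> y < n -> x != y -> ~~ L x -> ~~ L y ->
  exists2 z, L z & adjp x z != adjp y z.
Proof.
wlog lt_xy : x y / x < y.
  move=> sym_xy x_lt y_lt neq_xy Lx Ly.
  have [lt_xy|lt_yx] : x < y \/ y < x by lia.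
    exact: sym_xy.
  have [z Lz sep] := sym_xy y x lt_yx y_lt x_lt (negbT (ltn_eqF lt_yx)) Ly Lx.
  by exists z; rewrite // eq_sym.
move=> x_lt y_lt neq_xy Lx Ly.
have [/andP [x_gt0 Lxm]|no_xm] := boolP ((0 < x) && L x.-1).
  by exists x.-1; rewrite // /adjp; lia.
have [Lyp|no_yp] := boolP (L y.+1); first by exists y.+1; rewrite // /adjp; lia.
have [Lxp|no_xp] := boolP (L x.+1).
  have [y_eq|y_neq] := eqVneq y x.+2.
    have := @no_twins x; rewrite -y_eq => /(_ y_lt Lx Ly Lxp).
    by rewrite (negbTE no_xm) (negbTE no_yp).
  by exists x.+1; rewrite // /adjp; lia.
have [Lym|no_ym] := boolP (L y.-1).
  have : y.-1 != x.+1 by apply: contraNneq no_xp => <-.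
  by exists y.-1; rewrite // /adjp; lia.
have := undominated_unique x_lt y_lt Lx Ly.
rewrite /dominated (negbTE no_xm) (negbTE no_xp) (negbTE no_yp) (negbTE no_ym) andbF.
by move=> /(_ isT isT) eq_xy; rewrite eq_xy eqxx in neq_xy.
Qed.
End PathLocating.

Lemma succ_mod n w : w < n -> w.+1 %% n = if w.+1 == n then 0 else w.+1.
Proof. by move=> w_lt; case: eqP => [->|w_ne]; [exact: modnn | rewrite modn_small //; lia]. Qed.

Lemma adjcE n a b : 3 <= n -> a < n -> b < n ->
  adjc n a b = adjp a b || (a == 0) && (b == n.-1) || (b == 0) && (a == n.-1).
Proof.
move=> n_ge3 a_lt b_lt.
by rewrite /adjc /adjp !succ_mod //; do 2 case: ifP => /eqP ?; lia.
Qed.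

Lemma cycle_locating n (L : pred nat) : 5 <= n -> L 1 -> ~~ L 0 ->
  (forall v, L v -> v < n) ->
  (forall x y, x < n -> y < n -> x != y -> ~~ L x -> ~~ L y ->
     exists2 z, L z & adjp x z != adjp y z) ->
  forall x y, x < n -> y < n -> x != y -> ~~ L x -> ~~ L y ->
    exists2 z, L z & adjc n x z != adjc n y z.
Proof.
move=> n_ge5 L1 L0 L_lt path_loc x y; have n_ge3 : 2 < n by lia.
wlog y_ne0 : x y / y != 0.
  move=> sym_xy x_lt y_lt neq_xy Lx Ly; have [y0|y_ne0] := eqVneq y 0; last exact: sym_xy.
  have x_ne0 : x != 0 by rewrite -y0.
  rewrite eq_sym in neq_xy; have [z Lz sep] := sym_xy y x x_ne0 y_lt x_lt neq_xy Ly Lx.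
  by exists z; rewrite // eq_sym.
move=> x_lt y_lt neq_xy Lx Ly; have [z Lz sep] := path_loc x y x_lt y_lt neq_xy Lx Ly.
have z_ne0 : z != 0 by apply: contraNneq L0 => <-.
have z_lt := L_lt z Lz.
have [/andP [/eqP x0 /eqP zn]|no_wrap] := boolP ((x == 0) && (z == n.-1)).
  (* x = 0 and z = n-1 force y = n-2, and the vertex 1 separates 0 from n-2 *)
  have y_eq : y = n.-2 by move: sep; rewrite x0 zn /adjp; lia.
  by exists 1 => //; rewrite x0 y_eq !adjcE /adjp; lia.
have sep_unchanged u : ~~ ((u == 0) && (z == n.-1)) -> u < n -> adjc n u z = adjp u z.
  by move=> no_wrap_u u_lt; rewrite adjcE // (negbTE no_wrap_u) (negbTE z_ne0) /= !orbF.
by exists z; rewrite // !sep_unchanged // (negbTE y_ne0).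
Qed.

(* The vertices congruent to 1 or 3 modulo 5: two in every block of five. *)
Definition periodic_landmark (v : nat) : bool := (v %% 5 == 1) || (v %% 5 == 3).

(* The landmarks: the periodic ones, except that when n = 3 (mod 5) the final
   incomplete block of three vertices carries its landmark on its last vertex
   instead of its middle one. *)
Definition landmark (n v : nat) : bool :=
  (v < n) && if (n %% 5 == 3) && (n - 3 <= v) then v == n.-1 else periodic_landmark v.

(* The same predicate as a plain boolean formula, suitable for lia. *)
Lemma landmarkE n v : landmark n v =
  (v < n) && ((n %% 5 == 3) && (n - 3 <= v) && (v == n.-1) ||
              ~~ ((n %% 5 == 3) && (n - 3 <= v)) && ((v %% 5 == 1) || (v %% 5 == 3))).
Proof. by rewrite /landmark; case: ifP => _; rewrite ?andbT ?andbF ?orbF. Qed.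

Lemma landmark_lt n v : landmark n v -> v < n.
Proof. by case/andP. Qed.

Lemma mod5S v : v.+1 %% 5 = if v %% 5 == 4 then 0 else (v %% 5).+1.
Proof. by case: ifP => /eqP; lia. Qed.

Lemma mod5P v : 0 < v -> v.-1 %% 5 = if v %% 5 == 0 then 4 else (v %% 5).-1.
Proof. by case: ifP => /eqP; lia. Qed.

(* Once the residues of neighbouring vertices are expressed through those of x
   and n, the local facts below are decided by enumerating both residues. *)
Ltac residue_cases x n :=
  have := divn_eq x 5; have := divn_eq n 5;
  have := ltn_pmod x (isT : 0 < 5); have := ltn_pmod n (isT : 0 < 5);
  case: (x %% 5) => [|[|[|[|[|?]]]]]; case: (n %% 5) => [|[|[|[|[|?]]]]] /=; lia.

Lemma landmark_undominated n x : x < n -> ~~ landmark n x ->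
  ~~ dominated (landmark n) x -> x = n - n %% 5.
Proof.
move=> x_lt; rewrite /dominated !landmarkE mod5S.
case: (posnP x) => [->|x_gt0] /=; first by lia.
by rewrite mod5P //; residue_cases x n.
Qed.

Lemma landmark_no_twins n x : x.+2 < n ->
  ~~ landmark n x -> ~~ landmark n x.+2 -> landmark n x.+1 ->
  (0 < x) && landmark n x.-1 || landmark n x.+3.
Proof.
move=> x_lt; rewrite !landmarkE !mod5S.
case: (posnP x) => [->|x_gt0] /=; first by lia.
by rewrite mod5P //; residue_cases x n.
Qed.

(* Adding the vertex m adds a periodic landmark exactly when floor((2m+2)/5)
   increases. *)
Lemma count_periodic_landmark m :
  count periodic_landmark (iota 0 m) = (2 * m + 2) %/ 5.
Proof.
elim: m => [|m IH] //; rewrite -addn1 iotaD count_cat IH /= /periodic_landmark; lia.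
Qed.

(* Moving one landmark inside the last block does not change their number. *)
Lemma count_landmark n : count (landmark n) (iota 0 n) = (2 * n + 2) %/ 5.
Proof.
rewrite -count_periodic_landmark; have [r3|r_ne3] := boolP (n %% 5 == 3); last first.
  by apply: eq_in_count => v; rewrite mem_iota /landmark (negbTE r_ne3) /= => ->.
have [q ->] : exists q, n = q * 5 + 3.
  by exists (n %/ 5); rewrite {1}(divn_eq n 5) (eqP r3).
rewrite iotaD !count_cat add0n; congr (_ + _).
  apply: eq_in_count => v; rewrite mem_iota add0n /landmark modnMDl /= => v_lt.
  have -> : (v < q * 5 + 3) = true by lia.
  by have -> : (q * 5 + 3 - 3 <= v) = false by lia.
have m0 : (q * 5) %% 5 = 0 by rewrite modnMl.
have m1 : (q * 5).+1 %% 5 = 1 by rewrite -addn1 modnMDl.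
have m2 : (q * 5).+2 %% 5 = 2 by rewrite -addn2 modnMDl.
by rewrite /= /landmark /periodic_landmark m0 m1 m2 !ifT; lia.
Qed.

Lemma landmark0 n : 4 <= n -> ~~ landmark n 0.
Proof. by rewrite landmarkE; lia. Qed.

Lemma landmark1 n : 4 <= n -> landmark n 1.
Proof. by rewrite landmarkE; lia. Qed.

Lemma landmark_undominated_unique n x y : x < n -> y < n ->
  ~~ landmark n x -> ~~ landmark n y ->
  ~~ dominated (landmark n) x -> ~~ dominated (landmark n) y -> x = y.
Proof.
by move=> x_lt y_lt Lx Ly dx dy; rewrite (landmark_undominated x_lt Lx dx) (landmark_undominated y_lt Ly dy).
Qed.

Lemma card_ord_pred n (P : pred nat) : #|[pred i : 'I_n | P i]| = count P (iota 0 n).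
Proof.
rewrite -sum1_card big_mkcond /= -(big_mkord xpredT (fun i => if P i then 1 else 0)).
by rewrite /index_iota subn0 -sum1_count [RHS]big_mkcond.
Qed.

Lemma ord_locating n (e : rel 'I_n) (r : nat -> nat -> bool) (L : pred nat) :
  (forall i j : 'I_n, e i j = r i j) -> (forall v, L v -> v < n) ->
  (forall x y, x < n -> y < n -> x != y -> ~~ L x -> ~~ L y ->
     exists2 z, L z & r x z != r y z) ->
  locating e [pred i : 'I_n | L i].
Proof.
move=> eE L_lt L_loc x y neq_xy Lx Ly.
have [z Lz sep] := L_loc x y (ltn_ord x) (ltn_ord y) neq_xy Lx Ly.
by exists (Ordinal (L_lt z Lz)); rewrite //= !eE.
Qed.

Lemma path_adj_sym n : symmetric (path_adj n).
Proof. by move=> i j; rewrite /path_adj orbC. Qed.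

Lemma cycle_adj_sym n : symmetric (cycle_adj n).
Proof. by move=> i j; rewrite /cycle_adj orbC. Qed.

(* A neighbour in the path is determined by its side of x. *)
Lemma path_degree n (x : 'I_n) : #|[set y | path_adj n x y]| <= 2.
Proof.
apply: (@card_le_inj _ _ (fun y : 'I_n => x < y)) => [y y'|y _]; last by case: (x < y).
by rewrite !inE /path_adj => adj_y adj_y' same_side; apply: ord_inj; lia.
Qed.

(* A neighbour in the cycle is determined by whether it is the successor of x. *)
Lemma cycle_degree n (x : 'I_n) : 3 <= n -> #|[set y | cycle_adj n x y]| <= 2.
Proof.
move=> n_ge3; apply: (@card_le_inj _ _ (fun y : 'I_n => x.+1 %% n == y)) => [y y'|y _].
  rewrite !inE => adj_y adj_y' same; apply: ord_inj.
  move: adj_y adj_y' same (ltn_ord x) (ltn_ord y) (ltn_ord y').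
  rewrite -[cycle_adj n x y]/(adjc n x y) -[cycle_adj n x y']/(adjc n x y').
  by rewrite !adjcE // succ_mod // /adjp; case: ifP => /eqP; lia.
by case: (_ == _).
Qed.

Theorem mainTheorem2 (n : nat) (hn : 4 <= n) :
  is_bdim (path_adj n) ((2 * n + 2) %/ 5) /\
  is_bdim (cycle_adj n) ((2 * n + 2) %/ 5).
Proof.
have n_gt1 : 1 < #|'I_n| by rewrite card_ord; lia.
have card_L : #|[pred i : 'I_n | landmark n i]| = (2 * #|'I_n| + 2) %/ 5.
  by rewrite card_ord_pred count_landmark card_ord.
have path_loc := path_locating (@landmark_undominated_unique n) (@landmark_no_twins n).
rewrite -[n in (2 * n + 2) %/ 5]card_ord; split.
  apply: bdim_degree2 card_L => //; [exact: path_adj_sym | exact: path_degree |].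
  exact: ord_locating (@landmark_lt n) path_loc.
have [n4|n_ge5] : n = 4 \/ 5 <= n by lia.
  (* On the 4-cycle the landmarks 0 and 1 separate the remaining vertices 2 and 3. *)
  subst n; apply: (@bdim_degree2 _ _ [pred i : 'I_4 | i < 2]) => //.
  - exact: cycle_adj_sym.
  - by move=> x; exact: cycle_degree.
  - apply: (@ord_locating 4 _ (adjc 4) (fun v => v < 2)) => // [v|x y x_lt y_lt neq_xy Lx Ly].
      by move=> v_lt; apply: leq_trans v_lt _.
    by exists 0; rewrite // /adjc; lia.
  - by rewrite (card_ord_pred 4 (fun v => v < 2)) card_ord.
apply: bdim_degree2 card_L => //; [exact: cycle_adj_sym | by move=> x; apply: cycle_degree; lia |].
apply: (@ord_locating n _ (adjc n) _ _ (@landmark_lt n)) => //.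
exact: cycle_locating (landmark1 hn) (landmark0 hn) (@landmark_lt n) path_loc.
Qed.
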